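(* Let $\lambda\in\mathcal P_\epsilon(N)$ and let $\mathbf i=(i_1,\dots,i_l)$ be an admissible sequence for $\lambda$; if $\epsilon=1$ assume in addition that $N-2\sum_{j=1}^l i_j\ne2$. Then $(i_{\sigma(1)},\dots,i_{\sigma(l)})$ is an admissible sequence for $\lambda$ for every permutation $\sigma$ of $\{1,\dots,l\}$.
   Context: $\mathcal P_\epsilon(N)$ ($\epsilon=\pm1$) is the set of partitions $\lambda=(\lambda_1\ge\dots\ge\lambda_n\ge1)$ of $N$ in which every part $m$ with $\epsilon(-1)^m=1$ occurs with even multiplicity; conventions $\lambda_0=0$, $\lambda_i=0$ for $i>n$. A 2-step of $\lambda$ is a pair $(i,i+1)$, $1\le i<n$, with $\epsilon(-1)^{\lambda_i}=\epsilon(-1)^{\lambda_{i+1}}=-1$, $\lambda_{i-1}\ne\lambda_i$, $\lambda_{i+1}\ne\lambda_{i+2}$; $\Delta(\lambda)$ is the set of 2-steps. KS algorithm: for $1\le i\le n$, Case 1 occurs at $i$ if $\lambda_i\ge\lambda_{i+1}+2$, and then $\lambda^{(i)}=(\lambda_1-2,\dots,\lambda_i-2,\lambda_{i+1},\dots,\lambda_n)$; Case 2 occurs at $i$ if $(i,i+1)\in\Delta(\lambda)$ and $\lambda_i=\lambda_{i+1}$, and then $\lambda^{(i)}=(\lambda_1-2,\dots,\lambda_{i-1}-2,\lambda_i-1,\lambda_{i+1}-1,\lambda_{i+2},\dots,\lambda_n)$; zero parts discarded, $\lambda^{(i)}\in\mathcal P_\epsilon(N-2i)$. A sequence $(i_1,\dots,i_l)$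 is admissible for $\lambda$ if for each $k$ Case 1 or Case 2 occurs at $i_k$ for $\lambda^{(i_1,\dots,i_{k-1})}$, where $\lambda^\emptyset=\lambda$ and $\lambda^{(i_1,\dots,i_k)}=(\lambda^{(i_1,\dots,i_{k-1})})^{(i_k)}$. *)

From mathcomp Require Import all_boot all_fingroup.
Set Implicit Arguments. Unset Strict Implicit. Unset Printing Implicit Defensive.

(* The sign epsilon = +1 / -1 is encoded by a boolean [epsp]:
   epsp = true  <-> epsilon = +1,  epsp = false <-> epsilon = -1. *)

(* epsilon * (-1)^m = 1 *)
Definition sgn_pos (epsp : bool) (m : nat) : bool :=
  if epsp then ~~ odd m else odd m.
(* epsilon * (-1)^m = -1 *)
Definition sgn_neg (epsp : bool) (m : nat) : bool :=
  if epsp then odd m else ~~ odd m.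

(* A partition is a seq nat (lambda_1, ..., lambda_n); 1-indexed access
   with conventions lambda_0 = 0 and lambda_i = 0 for i > n. *)
Definition part (lam : seq nat) (i : nat) : nat :=
  if i is i'.+1 then nth 0 lam i' else 0.

Definition inP (epsp : bool) (N : nat) (lam : seq nat) : bool :=
  [&& sorted geq lam, all (fun m => 0 < m) lam, sumn lam == N &
      all (fun m => sgn_pos epsp m ==> ~~ odd (count_mem m lam)) lam].

Definition two_step (epsp : bool) (lam : seq nat) (i : nat) : bool :=
  [&& 1 <= i, i < size lam,
      sgn_neg epsp (part lam i), sgn_neg epsp (part lam i.+1),
      part lam i.-1 != part lam i &
      part lam i.+1 != part lam i.+2].

Definition case1 (lam : seq nat) (i : nat) : bool :=
  [&& 1 <= i, i <= size lam & part lam i.+1 + 2 <= part lam i].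

Definition case2 (epsp : bool) (lam : seq nat) (i : nat) : bool :=
  two_step epsp lam i && (part lam i == part lam i.+1).

Definition step1 (lam : seq nat) (i : nat) : seq nat :=
  filter (fun m => 0 < m)
    (mkseq (fun k => if k.+1 <= i then part lam k.+1 - 2 else part lam k.+1)
           (size lam)).

Definition step2 (lam : seq nat) (i : nat) : seq nat :=
  filter (fun m => 0 < m)
    (mkseq (fun k => if k.+1 < i then part lam k.+1 - 2
                     else if k.+1 <= i.+1 then part lam k.+1 - 1
                     else part lam k.+1)
           (size lam)).

(* The KS step: Case 1 and Case 2 are mutually exclusive. *)
Definition ks_step (epsp : bool) (lam : seq nat) (i : nat) : seq nat :=
  if case1 lam i then step1 lam i else step2 lam i.

Fixpoint admissible (epsp : bool) (lam : seq nat) (s : seq nat) : bool :=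
  match s with
  | [::] => true
  | i :: s' => (case1 lam i || case2 epsp lam i) &&
               admissible epsp (ks_step epsp lam i) s'
  end.

Definition permute_seq (s : seq nat) (sigma : 'S_(size s)) : seq nat :=
  [seq nth 0 s (sigma k) | k <- enum 'I_(size s)].

(** One KS step at [i] lowers λ_1, ..., λ_i by 2 (Case 1), or
   λ_1, ..., λ_{i-1} by 2 and λ_i, λ_{i+1} by 1 (Case 2); whether a step at [j]
   applies, and in which case, only depends on λ_{j-1}, ..., λ_{j+2}.

   The heart of the proof is the exchange lemma [ks_exchange]: if a step at [i]
   followed by a step at [j <> i] is applicable, then so is the step at [j]
   followed by the step at [i], and each step keeps its case.  Since the
   lowering operations of the two steps commute, both orders then produce the
   same partition ([ks_steps_commute]).  Hence two consecutive entries of an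
   admissible sequence can be swapped, and, moving entries one at a time, any
   rearrangement of an admissible sequence is admissible ([admissible_perm]). *)

From mathcomp Require Import all_boot all_fingroup zify.

Set Implicit Arguments.
Unset Strict Implicit.
Unset Printing Implicit Defensive.

(** ** KS steps on part functions *)

Definition nonincr (f : nat -> nat) : Prop := forall x y, 0 < x <= y -> f y <= f x.

Definition big_drop (f : nat -> nat) (i : nat) : bool := f i.+1 + 2 <= f i.

(** A KS step at [i] applies (Case 1 or Case 2), read on the part function:
    the conditions [i <= n] and [i < n] become positivity of λ_i, λ_{i+1}. *)
Definition applicable (e : bool) (f : nat -> nat) (i : nat) : bool :=
  [&& 1 <= i, 0 < f i & big_drop f i] ||
  [&& 1 <= i, 0 < f i.+1, sgn_neg e (f i), sgn_neg e (f i.+1),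
      f i.-1 != f i, f i.+1 != f i.+2 & f i == f i.+1].

(** The lowering performed by a step at [i] in Case 1 ([c1 = true]) or
    Case 2 ([c1 = false]). *)
Definition lower (c1 : bool) (f : nat -> nat) (i k : nat) : nat :=
  if c1 then (if k <= i then f k - 2 else f k)
  else (if k < i then f k - 2 else if k <= i.+1 then f k - 1 else f k).

Definition ks_fun (f : nat -> nat) (i : nat) : nat -> nat := lower (big_drop f i) f i.

Lemma big_drop_ext f g i : f =1 g -> big_drop f i = big_drop g i.
Proof. by move=> fg; rewrite /big_drop !fg. Qed.

Lemma applicable_ext e f g i : f =1 g -> applicable e f i = applicable e g i.
Proof. by move=> fg; rewrite /applicable (big_drop_ext i fg) !fg. Qed.

Lemma ks_fun_ext f g i : f =1 g -> ks_fun f i =1 ks_fun g i.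
Proof. by move=> fg k; rewrite /ks_fun /lower (big_drop_ext i fg) !fg. Qed.

Lemma applicable_pos e f i : applicable e f i -> 0 < i.
Proof. by case/orP=> /and3P[]. Qed.

Lemma ks_fun_below f i k : k < i -> ks_fun f i k = f k - 2.
Proof. by rewrite /ks_fun /lower => ?; repeat case: ifP; lia. Qed.

Lemma ks_fun_at f i k : k = i ->
  ks_fun f i k = if big_drop f i then f i - 2 else f i - 1.
Proof. by move->; rewrite /ks_fun /lower; repeat case: ifP; lia. Qed.

Lemma ks_fun_next f i k : k = i.+1 ->
  ks_fun f i k = if big_drop f i then f i.+1 else f i.+1 - 1.
Proof. by move->; rewrite /ks_fun /lower; repeat case: ifP; lia. Qed.

Lemma ks_fun_above f i k : i.+1 < k -> ks_fun f i k = f k.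
Proof. by rewrite /ks_fun /lower => ?; repeat case: ifP; lia. Qed.

Lemma odd_sub2 x : x != 1 -> odd (x - 2) = odd x.
Proof. by case: x => [|[|x]] //= _; rewrite !subSS subn0 negbK. Qed.

Lemma odd_sub1 x : 0 < x -> odd (x - 1) = ~~ odd x.
Proof. by case: x => [|x] //= _; rewrite subSS subn0 negbK. Qed.

(** Decision procedure for statements about finitely many values of a part
    function around one or two KS steps, once the relative position of the
    indices is fixed: every [ks_fun] value is evaluated (the position being
    decided by [lia]), the hypotheses are split into their Case 1 / Case 2
    alternatives, the resulting conditionals are decided, parities of lowered
    values are expressed through parities of original values, and the
    remaining linear arithmetic is left to [lia]. *)
Ltac eval_ks := repeat match goal with
  | |- context [ks_fun ?f ?i ?k] =>
    first [ rewrite (@ks_fun_below f i k); last lia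
          | rewrite (@ks_fun_above f i k); last lia
          | rewrite (@ks_fun_at f i k); last lia
          | rewrite (@ks_fun_next f i k); last lia ]
  end.

Ltac destruct_bool_hyps := repeat match goal with
  | H : is_true (_ && _) |- _ =>
    let H1 := fresh "H" in let H2 := fresh "H" in case/andP: H => H1 H2
  | H : is_true (_ || _) |- _ => let H1 := fresh "H" in case/orP: H => H1
  end.

Ltac decide_ifs := repeat match goal with
  | |- context [if ?c then _ else _] =>
    first [ have -> : c = true by lia | have -> : c = false by lia
          | let H := fresh "H" in case: (boolP c) => H ]
  end.

Ltac abstract_parity := repeat match goal with
  | |- context [odd (?x - 2)] => rewrite (@odd_sub2 x); last lia
  | |- context [odd (?x - 1)] => rewrite (@odd_sub1 x); last lia
  | H : context [odd (?x - 2)] |- _ => rewrite (@odd_sub2 x) in H; last lia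
  | H : context [odd (?x - 1)] |- _ => rewrite (@odd_sub1 x) in H; last lia
  end;
  repeat match goal with
  | |- context [odd (?f ?p)] => lazymatch f with subn _ => fail | _ =>
      let o := fresh "o" in set (o := odd (f p)) in *; clearbody o end
  end.

(** Turn a conditional fact [P -> Q] into [Q] or drop it when [lia] decides
    [P], which keeps the final arithmetic problems small. *)
Ltac settle H := match type of H with ?P -> _ =>
  first [ specialize (H ltac:(lia)) | (have _ : ~ P by lia); clear H | idtac ] end.

Lemma ks_fun_step_down e f i x : nonincr f -> applicable e f i -> 0 < x ->
  ks_fun f i x.+1 <= ks_fun f i x.
Proof.
move=> mono appl x_pos; case: i appl (applicable_pos appl) => // a appl _.
have Mx : f x.+1 <= f x by apply: mono; lia.
have Ma : x = a -> f a.+1 <= f a by move=> xa; apply: mono; lia.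
have Ma2 : f a.+3 <= f a.+2 by apply: mono; lia.
move: appl; rewrite /applicable /big_drop /sgn_neg /=.
have : x < a \/ x = a \/ x = a.+1 \/ x = a.+2 \/ a.+2 < x by lia.
case=> [?|[?|[?|[?|?]]]]; subst; eval_ks; rewrite /big_drop => ?.
all: destruct_bool_hyps; decide_ifs; lia.
Qed.

Lemma lower_comm c c' f i j k : lower c (lower c' f j) i k = lower c' (lower c f i) j k.
Proof. by rewrite /lower; case: c; case: c'; repeat case: ifP; lia. Qed.

Lemma ks_fun_comm f i j :
  big_drop (ks_fun f j) i = big_drop f i -> big_drop (ks_fun f i) j = big_drop f j ->
  ks_fun (ks_fun f i) j =1 ks_fun (ks_fun f j) i.
Proof. by rewrite /ks_fun => -> -> k; apply: lower_comm. Qed.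

(** The
    claim involves the values of [f] on the windows [i-1, i+2] and [j-1, j+2]
    only; it is checked separately when the windows are far apart and for each
    of the four overlapping relative positions. *)
Lemma ks_exchange e f i j : f 0 = 0 -> nonincr f -> i != j ->
  applicable e f i -> applicable e (ks_fun f i) j ->
  [/\ applicable e f j, applicable e (ks_fun f j) i,
      big_drop (ks_fun f j) i = big_drop f i & big_drop (ks_fun f i) j = big_drop f j].
Proof.
move=> f0 mono ij appl_i appl_ij.
case: i ij appl_i appl_ij (applicable_pos appl_i) => // a ij appl_a appl_ab _.
case: j ij appl_ab (applicable_pos appl_ab) => // b ij appl_ab _.
have Ma1 : 0 < a -> f a.+1 <= f a by move=> ?; apply: mono; lia.
have Ma2 : f a.+2 <= f a.+1 by apply: mono; lia.
have Ma3 : f a.+3 <= f a.+2 by apply: mono; lia.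
have Mb1 : 0 < b -> f b.+1 <= f b by move=> ?; apply: mono; lia.
have Mb2 : f b.+2 <= f b.+1 by apply: mono; lia.
have Mb3 : f b.+3 <= f b.+2 by apply: mono; lia.
have Mab : b.+3 <= a -> f a <= f b.+3 by move=> ?; apply: mono; lia.
have Mba : a.+3 <= b -> f b <= f a.+3 by move=> ?; apply: mono; lia.
have Ma0 : a = 0 -> f a = 0 by move->.
have Mb0 : b = 0 -> f b = 0 by move->.
have : b.+3 <= a \/ b.+2 = a \/ b.+1 = a \/ a.+1 = b \/ a.+2 = b \/ a.+3 <= b by lia.
case=> [far|[eq|[eq|[eq|[eq|far]]]]]; subst; move: appl_a appl_ab; case: e.
all: settle Ma1; settle Mb1; settle Mab; settle Mba; settle Ma0; settle Mb0.
all: rewrite /applicable /big_drop /sgn_neg /=; eval_ks; rewrite /big_drop.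
all: intro; destruct_bool_hyps; decide_ifs.
all: intro; destruct_bool_hyps; abstract_parity; split; lia.
Qed.

(** ** From part functions to partitions *)

(** The properties of [lam \in P_eps(N)] used below: parts are positive and
    sorted in nonincreasing order. *)
Definition is_partition (lam : seq nat) : bool :=
  sorted geq lam && all (fun m => 0 < m) lam.

Lemma geq_trans : transitive geq.
Proof. exact: rev_trans leq_trans. Qed.

Lemma part_positive lam i : is_partition lam -> 0 < i ->
  (i <= size lam) = (0 < part lam i).
Proof.
case/andP=> _ /allP lam_pos; case: i => [//|i] _ /=.
case: ltnP => [i_lt | i_ge]; first by rewrite lam_pos ?mem_nth.
by rewrite nth_default.
Qed.

Lemma part_nonincr lam : is_partition lam -> nonincr (part lam).
Proof.
case/andP=> lam_sorted _ [//|x] [//|y] /= xy.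
case: (ltnP y (size lam)) => y_lt; last by rewrite nth_default.
by apply: (sorted_leq_nth geq_trans leqnn 0 lam_sorted); rewrite ?inE //; lia.
Qed.

(** Discarding zero parts of a nonincreasing sequence only removes a tail of
    zeros, so it does not change the part function. *)
Lemma nth_filter_positive (s : seq nat) k : sorted geq s ->
  nth 0 [seq m <- s | 0 < m] k = nth 0 s k.
Proof.
elim: s k => [|x s IH] k //= s_sorted.
have s'_sorted : sorted geq s := path_sorted s_sorted.
case: ifP => [x_pos | x_zero]; first by case: k => [|k] //=; apply: IH.
have s_zero : all (fun m => m == 0) s.
  by apply/allP=> y /(allP (order_path_min geq_trans s_sorted)) /=; lia.
rewrite (@eq_in_filter _ _ pred0) ?filter_pred0 => [|y /(allP s_zero) /eqP -> //].
case: k => [|k] /=; first lia.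
case: (ltnP k (size s)) => [k_lt | k_ge]; last by rewrite nth_default.
by apply/esym/eqP/(allP s_zero)/mem_nth.
Qed.

Lemma part_inj l1 l2 : is_partition l1 -> is_partition l2 -> part l1 =1 part l2 -> l1 = l2.
Proof.
move=> l1P l2P eq12.
have size_le l l' : is_partition l -> is_partition l' -> part l =1 part l' ->
    size l <= size l'.
  move=> lP l'P eql; case: (posnP (size l)) => [-> // | l_pos].
  by rewrite (part_positive l'P l_pos) -eql -(part_positive lP l_pos).
have size12 : size l1 = size l2.
  by apply/eqP; rewrite eqn_leq !size_le // => k; rewrite eq12.
by apply: (eq_from_nth (x0 := 0) size12) => k _; apply: (eq12 k.+1).
Qed.

Lemma applicable_part e lam i : is_partition lam ->
  case1 lam i || case2 e lam i = applicable e (part lam) i.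
Proof.
move=> lamP; rewrite /case1 /case2 /two_step /applicable.
case: i => [//|i]; rewrite (part_positive lamP (ltn0Sn i)) (part_positive lamP (ltn0Sn i.+1)).
by rewrite !andbA.
Qed.

Lemma case1_part e lam i : is_partition lam -> applicable e (part lam) i ->
  case1 lam i = big_drop (part lam) i.
Proof.
move=> lamP appl; have i_pos := applicable_pos appl.
by rewrite /case1 (part_positive lamP i_pos) /big_drop; lia.
Qed.

Definition lowered (lam : seq nat) (i : nat) : seq nat :=
  mkseq (fun k => ks_fun (part lam) i k.+1) (size lam).

Lemma ks_stepE e lam i : is_partition lam -> applicable e (part lam) i ->
  ks_step e lam i = [seq m <- lowered lam i | 0 < m].
Proof.
move=> lamP appl; rewrite /ks_step (case1_part lamP appl) /step1 /step2.
by rewrite /lowered /ks_fun /lower; case: big_drop.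
Qed.

(** [lowered λ i] is nonincreasing, so discarding its zeros keeps its values. *)
Lemma lowered_sorted e lam i : is_partition lam -> applicable e (part lam) i ->
  sorted geq (lowered lam i).
Proof.
move=> lamP appl; apply/(sortedP 0) => k; rewrite size_mkseq => k_lt.
rewrite !nth_mkseq ?(ltnW k_lt) //.
by apply: (ks_fun_step_down (part_nonincr lamP) appl).
Qed.

Lemma ks_part e lam i : is_partition lam -> applicable e (part lam) i ->
  part (ks_step e lam i) =1 ks_fun (part lam) i.
Proof.
move=> lamP appl [|k]; first by rewrite /ks_fun /lower; repeat case: ifP.
rewrite (ks_stepE lamP appl) /= nth_filter_positive ?(lowered_sorted lamP appl) //.
case: (ltnP k (size lam)) => [k_lt | k_ge]; first by rewrite nth_mkseq.
rewrite nth_default ?size_mkseq // /ks_fun /lower.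
by rewrite /= nth_default //; repeat case: ifP.
Qed.

Lemma ks_step_partition e lam i : is_partition lam -> applicable e (part lam) i ->
  is_partition (ks_step e lam i).
Proof.
move=> lamP appl; rewrite (ks_stepE lamP appl) /is_partition filter_all andbT.
exact: sorted_filter geq_trans _ _ (lowered_sorted lamP appl).
Qed.

Lemma ks_steps_commute e lam i j : is_partition lam -> i != j ->
  applicable e (part lam) i -> applicable e (part (ks_step e lam i)) j ->
  [/\ applicable e (part lam) j, applicable e (part (ks_step e lam j)) i &
      ks_step e (ks_step e lam i) j = ks_step e (ks_step e lam j) i].
Proof.
move=> lamP ij appl_i appl_ij.
have lam_iP := ks_step_partition lamP appl_i.
have part_i := ks_part lamP appl_i.
have appl_ij_fun : applicable e (ks_fun (part lam) i) j.
  by rewrite -(applicable_ext _ _ part_i).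
have [appl_j appl_ji_fun drop_i drop_j] :=
  ks_exchange (erefl : part lam 0 = 0) (part_nonincr lamP) ij appl_i appl_ij_fun.
have lam_jP := ks_step_partition lamP appl_j.
have part_j := ks_part lamP appl_j.
have appl_ji : applicable e (part (ks_step e lam j)) i by rewrite (applicable_ext _ _ part_j).
split=> //; apply: part_inj.
- exact: ks_step_partition lam_iP appl_ij.
- exact: ks_step_partition lam_jP appl_ji.
move=> k; rewrite (ks_part lam_iP appl_ij) (ks_part lam_jP appl_ji).
by rewrite (ks_fun_ext _ part_i) (ks_fun_ext _ part_j) ks_fun_comm.
Qed.

(** ** Rearranging admissible sequences *)

Lemma admissible_swap e lam i j s : is_partition lam ->
  admissible e lam [:: i, j & s] -> admissible e lam [:: j, i & s].
Proof.
move=> lamP /= /and3P[appl_i appl_ij adm_s].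
have [ij_eq | ij] := eqVneq i j; first by subst j; rewrite /= appl_i appl_ij.
rewrite applicable_part // in appl_i.
have lam_iP := ks_step_partition lamP appl_i.
rewrite applicable_part // in appl_ij.
have [appl_j appl_ji commute] := ks_steps_commute lamP ij appl_i appl_ij.
have lam_jP := ks_step_partition lamP appl_j.
by rewrite /= applicable_part // appl_j applicable_part // appl_ji -commute.
Qed.

Lemma admissible_insert e lam i s1 s2 : is_partition lam ->
  admissible e lam (i :: s1 ++ s2) -> admissible e lam (s1 ++ i :: s2).
Proof.
elim: s1 lam => [//|j s1 IH] lam lamP adm.
have /andP[appl_j adm_j] := admissible_swap lamP adm.
have lam_jP : is_partition (ks_step e lam j).
  by rewrite applicable_part // in appl_j; exact: ks_step_partition lamP appl_j.
by rewrite /= appl_j IH.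
Qed.

Lemma admissible_perm e lam s t : is_partition lam -> perm_eq s t ->
  admissible e lam s -> admissible e lam t.
Proof.
elim: s t lam => [|i s IH] t lam lamP; first by move/perm_size; case: t.
move=> st /andP[appl_i adm_s].
have lam_iP : is_partition (ks_step e lam i).
  by rewrite applicable_part // in appl_i; exact: ks_step_partition lamP appl_i.
have i_in_t : i \in t by rewrite -(perm_mem st) mem_head.
case/splitPr: i_in_t st => t1 t2 st.
apply: admissible_insert => //; rewrite /= appl_i.
apply: IH adm_s => //.
by rewrite -(perm_cons i) (perm_trans st) // -cat1s perm_catCA.
Qed.

Lemma permute_seq_perm (s : seq nat) (sigma : 'S_(size s)) :
  perm_eq (permute_seq sigma) s.
Proof.
have enum_sigma : perm_eq [seq sigma k | k <- enum 'I_(size s)] (enum 'I_(size s)).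
  apply: uniq_perm => [|| k]; first by rewrite map_inj_uniq ?enum_uniq //; apply: perm_inj.
    exact: enum_uniq.
  rewrite mem_enum; apply/mapP; exists (sigma^-1 k)%g; by rewrite ?mem_enum ?permKV.
have -> : permute_seq sigma = map (nth 0 s \o val) [seq sigma k | k <- enum 'I_(size s)].
  by rewrite /permute_seq (map_comp (nth 0 s \o val) (fun k => sigma k)).
apply: perm_trans (perm_map _ enum_sigma) _.
by rewrite map_comp val_enum_ord -/(mkseq _ _) mkseq_nth.
Qed.

Unset Implicit Arguments.

Theorem mainTheorem12 (epsp : bool) (N : nat) (lam : seq nat) (s : seq nat)
  (sigma : 'S_(size s)) :
  inP epsp N lam ->
  admissible epsp lam s ->
  (epsp = true -> N <> 2 * sumn s + 2) ->
  admissible epsp lam (permute_seq sigma).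
Proof.
move=> lamP adm_s _.
have lam_partition : is_partition lam.
  by case/and4P: lamP => sorted_lam pos_lam _ _; rewrite /is_partition sorted_lam pos_lam.
by apply: admissible_perm lam_partition _ adm_s; rewrite perm_sym permute_seq_perm.
Qed.
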